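(* For every $\varepsilon>0$ and every $\alpha<1$ there exists $\delta>0$ such that the following holds. Let $G$ be a connected graph on vertex set $[n]$, let $R\sim G(n,\varepsilon/n)$ and $G^*=G\cup R$. Then asymptotically almost surely, for every set $S\subseteq [n]$ with $0<|S|\le \alpha n$, $$|\partial_{G^*}S|\ge \frac{\delta}{\log(en/|S|)}\,|S|.$$ In particular, asymptotically almost surely $c(G^* )\ge \frac{\delta}{\log(en)}$.
   Context: $G(n,p)$ denotes the binomial random graph on $[n]$ with each pair an edge independently with probability $p$; $G\cup R$ is the graph on $[n]$ with edge set the union of those of $G$ and $R$. For a graph $H$ and a vertex set $S$, $\partial_H S$ is the set of edges of $H$ with exactly one endpoint in $S$. The Cheeger constant is $c(H)=\min\{|\partial_H U|/|U| : 0<|U|\le |V(H)|/2\}$. Asymptotically almost surely means with probability tending to $1$ as $n\to\infty$, for an arbitrary sequence of such graphs $G=G_n$. *)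

(* classical reals. Vertex set [n] is {0,...,n-1}. *)
From Stdlib Require Import Reals List Arith Bool ClassicalEpsilon Relations.
Import ListNotations.
Open Scope R_scope.

(* All subsets of a list, as sublists (each subset exactly once when l has no duplicates). *)
Fixpoint sublists {A : Type} (l : list A) : list (list A) :=
  match l with
  | [] => [[]]
  | x :: l' => map (cons x) (sublists l') ++ sublists l'
  end.

(* Unordered pairs {i,j} with i < j < n, i.e. the potential edges of a graph on [n]. *)
Definition pairs (n : nat) : list (nat * nat) :=
  flat_map (fun j => map (fun i => (i, j)) (seq 0 j)) (seq 0 n).

Definition simple_graph (G : nat -> nat -> bool) : Prop :=
  (forall i j, G i j = G j i) /\ (forall i, G i i = false).

Definition connected (n : nat) (G : nat -> nat -> bool) : Prop :=
  forall u v, (u < n)%nat -> (v < n)%nat ->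
    clos_refl_trans nat (fun x y => (x < n)%nat /\ (y < n)%nat /\ G x y = true) u v.

Definition adj_of (R : list (nat * nat)) (i j : nat) : bool :=
  existsb (fun e => ((fst e =? i) && (snd e =? j)) || ((fst e =? j) && (snd e =? i)))%nat R.

Definition graph_union (G : nat -> nat -> bool) (R : list (nat * nat)) (i j : nat) : bool :=
  G i j || adj_of R i j.

Definition memb (S : list nat) (i : nat) : bool := existsb (Nat.eqb i) S.

Definition boundary (n : nat) (H : nat -> nat -> bool) (S : list nat) : nat :=
  length (filter (fun e => H (fst e) (snd e) && xorb (memb S (fst e)) (memb S (snd e)))
                 (pairs n)).

(* Cheeger constant: min over nonempty U ⊆ [n] with |U| <= n/2 of |∂U|/|U|
   (set to 0 when there is no such U, i.e. n < 2). *)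
Definition cheeger (n : nat) (H : nat -> nat -> bool) : R :=
  let rs := map (fun U => INR (boundary n H U) / INR (length U))
                (filter (fun U => (0 <? length U)%nat && (2 * length U <=? n)%nat)
                        (sublists (seq 0 n))) in
  match rs with
  | [] => 0
  | r :: rs' => fold_right Rmin r rs'
  end.

(* Probability, under G(n,p) (edge set R = random subset of pairs n, each pair kept
   independently with probability p), of the event E. *)
Definition prob_Gnp (n : nat) (p : R) (E : list (nat * nat) -> Prop) : R :=
  fold_right Rplus 0
    (map (fun R => if excluded_middle_informative (E R)
                   then p ^ length R * (1 - p) ^ (length (pairs n) - length R)
                   else 0)
         (sublists (pairs n))).

From Stdlib Require Import Reals List.
From Stdlib Require Import Lra Lia Relations Bool Arith Classical ClassicalEpsilon.
Import ListNotations.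
Open Scope R_scope.

(* Fix b = max(alpha, 1/2) < 1 and call a set S with 0 < |S| <= b n *bad* if its
   boundary in G is below t(S) = delta |S| / ln(e n/|S|).  The event fails only if
   some bad S receives fewer than t(S) random crossing edges, so by a union bound
   with the generating function of G(n,p) (a Chernoff-type estimate) the failure
   probability is at most the sum over bad S of exp(t(S) - (p/2)|S|(n-|S|)), and
   p |S| (n - |S|)/2 >= c0 |S| with c0 = eps (1-b)/2.  Bad sets of size k are
   counted through a spanning tree T of G: S is determined by the set of tree edges
   it cuts (plus whether it contains the root), so there are at most as many bad
   sets as subsets of [n] of size < t + 1, and those number at most
   exp(s (t+1) + n e^{-s}) for every s >= 0.  A numeric estimate with a suitable
   s turns each size class into at most 1/(delta^3 n^3); summing over sizes the
   failure probability is O(1/n^2).  The Cheeger bound follows since every U with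
   |U| <= n/2 has ln(e n/|U|) <= ln(e n). *)

Definition sumR {A : Type} (f : A -> R) (l : list A) : R := fold_right Rplus 0 (map f l).
Definition prodR {A : Type} (f : A -> R) (l : list A) : R := fold_right Rmult 1 (map f l).

Lemma sumR_app {A} (f : A -> R) l1 l2 : sumR f (l1 ++ l2) = sumR f l1 + sumR f l2.
Proof. induction l1; unfold sumR in *; simpl; try rewrite IHl1; lra. Qed.

Lemma sumR_map {A B} (f : B -> R) (g : A -> B) l : sumR f (map g l) = sumR (fun x => f (g x)) l.
Proof. unfold sumR; rewrite map_map; reflexivity. Qed.

Lemma sumR_ext {A} (f g : A -> R) l : (forall x, In x l -> f x = g x) -> sumR f l = sumR g l.
Proof.
  induction l; intros H; unfold sumR in *; simpl; auto.
  rewrite H by (left; auto). rewrite IHl; auto. intros; apply H; right; auto.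
Qed.

Lemma sumR_le {A} (f g : A -> R) l : (forall x, In x l -> f x <= g x) -> sumR f l <= sumR g l.
Proof.
  induction l; intros H; unfold sumR in *; simpl; [lra|].
  assert (f a <= g a) by (apply H; left; auto).
  assert (fold_right Rplus 0 (map f l) <= fold_right Rplus 0 (map g l))
    by (apply IHl; intros; apply H; right; auto).
  lra.
Qed.

Lemma sumR_scal {A} (c : R) (f : A -> R) l : sumR (fun x => c * f x) l = c * sumR f l.
Proof. induction l; unfold sumR in *; simpl; [lra | rewrite IHl; lra]. Qed.

Lemma sumR_plus {A} (f g : A -> R) l : sumR (fun x => f x + g x) l = sumR f l + sumR g l.
Proof. induction l; unfold sumR in *; simpl; [lra | rewrite IHl; lra]. Qed.

Lemma sumR_minus {A} (f g : A -> R) l : sumR (fun x => f x - g x) l = sumR f l - sumR g l.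
Proof. induction l; unfold sumR in *; simpl; [lra | rewrite IHl; lra]. Qed.

Lemma sumR_const {A} (c : R) (l : list A) : sumR (fun _ => c) l = INR (length l) * c.
Proof. induction l; unfold sumR in *; [simpl; lra|]. cbn [length map fold_right]. rewrite IHl, S_INR. lra. Qed.

Lemma sumR_nonneg {A} (f : A -> R) l : (forall x, In x l -> 0 <= f x) -> 0 <= sumR f l.
Proof.
  intros H. apply Rle_trans with (sumR (fun _ : A => 0) l).
  - rewrite sumR_const; lra.
  - apply sumR_le; auto.
Qed.

Lemma sumR_swap {A B} (f : A -> B -> R) l1 l2 :
  sumR (fun x => sumR (fun y => f x y) l2) l1 = sumR (fun y => sumR (fun x => f x y) l1) l2.
Proof.
  induction l1; unfold sumR in *; simpl.
  - induction l2; simpl; auto. rewrite <- IHl2. lra.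
  - rewrite IHl1. fold (sumR (fun y => f a y + fold_right Rplus 0 (map (fun x => f x y) l1)) l2).
    rewrite sumR_plus. reflexivity.
Qed.

Lemma sumR_ge_term {A} (f : A -> R) l x :
  (forall y, In y l -> 0 <= f y) -> In x l -> f x <= sumR f l.
Proof.
  induction l; intros H Hx; simpl in Hx; [contradiction|]. unfold sumR in *; simpl.
  assert (0 <= f a) by (apply H; left; auto).
  assert (0 <= fold_right Rplus 0 (map f l))
    by (apply (sumR_nonneg f l); intros; apply H; right; auto).
  destruct Hx as [<-|Hx]; [lra|].
  assert (f x <= fold_right Rplus 0 (map f l)) by (apply IHl; auto; intros; apply H; right; auto).
  lra.
Qed.

Lemma sumR_filter {A} (f : A -> R) P l : sumR f (filter P l) = sumR (fun x => if P x then f x else 0) l.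
Proof. induction l; unfold sumR in *; simpl; auto. destruct (P a); simpl; rewrite IHl; ring. Qed.

Lemma length_filter_sumR {A} (P : A -> bool) l :
  INR (length (filter P l)) = sumR (fun x => if P x then 1 else 0) l.
Proof. induction l; unfold sumR in *; simpl; auto. destruct (P a); cbn [length]; try rewrite S_INR; lra. Qed.

Lemma prodR_const {A} (c : R) (l : list A) : prodR (fun _ => c) l = c ^ length l.
Proof. induction l; unfold prodR in *; simpl; auto. rewrite IHl; reflexivity. Qed.

Lemma sumR_by_length (f : list nat -> R) (L : list (list nat)) (n : nat) :
  (forall S, In S L -> (length S <= n)%nat) ->
  sumR f L = sumR (fun k => sumR f (filter (fun S => (length S =? k)%nat) L)) (seq 0 (n + 1)).
Proof.
  intros H.
  assert (Hdelta : forall (c : R) m N, (m < N)%nat ->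
            sumR (fun k => if (m =? k)%nat then c else 0) (seq 0 N) = c).
  { intros c m N. induction N; intros Hm; [lia|]. rewrite seq_S, sumR_app.
    destruct (Nat.eq_dec m N) as [->|Hne].
    - rewrite (sumR_ext _ (fun _ => 0)), sumR_const.
      + unfold sumR; simpl. rewrite Nat.eqb_refl. ring.
      + intros x Hx. apply in_seq in Hx. replace (N =? x)%nat with false; auto.
        symmetry; apply Nat.eqb_neq; lia.
    - rewrite IHN by lia. apply Nat.eqb_neq in Hne. unfold sumR; simpl. rewrite Hne. ring. }
  rewrite (sumR_ext _ (fun S => sumR (fun k => if (length S =? k)%nat then f S else 0) (seq 0 (n+1)))).
  - rewrite sumR_swap. apply sumR_ext. intros k _. rewrite sumR_filter. reflexivity.
  - intros S HS. rewrite Hdelta; auto. specialize (H S HS). lia.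
Qed.

Lemma sublists_incl {A} (l S : list A) : In S (sublists l) -> incl S l.
Proof.
  revert S; induction l; simpl; intros S H.
  - destruct H as [<-|[]]. intros x [].
  - apply in_app_or in H. destruct H as [H|H].
    + apply in_map_iff in H. destruct H as [S1 [<- H1]].
      intros x [->|Hx]; [left; auto | right; apply (IHl S1); auto].
    + intros x Hx; right; apply (IHl S); auto.
Qed.

Lemma sublists_length {A} (l S : list A) : In S (sublists l) -> (length S <= length l)%nat.
Proof.
  revert S; induction l; simpl; intros S H.
  - destruct H as [<-|[]]. simpl; lia.
  - apply in_app_or in H. destruct H as [H|H].
    + apply in_map_iff in H. destruct H as [S1 [<- H1]]. simpl. specialize (IHl _ H1). lia.
    + specialize (IHl _ H). lia.
Qed.

Lemma sublists_NoDup_elem {A} (l S : list A) : NoDup l -> In S (sublists l) -> NoDup S.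
Proof.
  revert S; induction l; simpl; intros S Hl H.
  - destruct H as [<-|[]]. constructor.
  - inversion Hl; subst. apply in_app_or in H. destruct H as [H|H]; auto.
    apply in_map_iff in H. destruct H as [S1 [<- H1]]. constructor; auto.
    intro Ha. apply (sublists_incl _ _ H1) in Ha. contradiction.
Qed.

Lemma sublists_NoDup {A} (l : list A) : NoDup l -> NoDup (sublists l).
Proof.
  induction l; simpl; intros Hl; [constructor; simpl; auto; constructor|].
  inversion Hl; subst. apply NoDup_app; auto.
  - apply NoDup_map_NoDup_ForallPairs; auto. intros x y _ _ E. inversion E; auto.
  - intros S HA HB. apply in_map_iff in HA. destruct HA as [S1 [<- _]].
    apply H1. apply (sublists_incl _ _ HB a). left; auto.
Qed.

Lemma filter_in_sublists {A} (f : A -> bool) l : In (filter f l) (sublists l).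
Proof.
  induction l; simpl; [left; auto|].
  destruct (f a); apply in_or_app; [left; apply in_map | right]; auto.
Qed.

Lemma sublists_ext {A} (l S S' : list A) : NoDup l -> In S (sublists l) -> In S' (sublists l) ->
  (forall x, In x l -> (In x S <-> In x S')) -> S = S'.
Proof.
  revert S S'; induction l; simpl; intros S S' Hl H H' E.
  - destruct H as [<-|[]]; destruct H' as [<-|[]]; auto.
  - inversion Hl as [|? ? Hna Hnd]; subst.
    apply in_app_or in H; apply in_app_or in H'.
    assert (Ea : In a S <-> In a S') by (apply E; left; auto).
    destruct H as [H|H]; [apply in_map_iff in H; destruct H as [S1 [<- H1]]|];
    (destruct H' as [H'|H']; [apply in_map_iff in H'; destruct H' as [S2 [<- H2]]|]).
    + f_equal. apply IHl; auto. intros x Hx.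
      assert (Hxa : a <> x) by (intros ->; contradiction).
      specialize (E x (or_intror Hx)). simpl in E. tauto.
    + exfalso. apply Hna, (sublists_incl _ _ H'), Ea. left; auto.
    + exfalso. apply Hna, (sublists_incl _ _ H), Ea. left; auto.
    + apply IHl; auto.
Qed.

(* Binomial theorem over subsets:
   sum_{T ⊆ l} a^|T| b^(|l|-|T|) prod_{e in T} h e = prod_{e in l} (a h e + b).
   This is the generating function of the random subset model G(n,p). *)
Lemma sum_sublists_binomial {A} (a b : R) (h : A -> R) (l : list A) :
  sumR (fun T => a ^ length T * b ^ (length l - length T) * prodR h T) (sublists l)
  = prodR (fun e => a * h e + b) l.
Proof.
  induction l as [|x l IH]; simpl; [unfold sumR, prodR; simpl; lra|].
  rewrite sumR_app, sumR_map.
  rewrite (sumR_ext _ (fun T => (a * h x) * (a ^ length T * b ^ (length l - length T) * prodR h T))).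
  2:{ intros T _. simpl. unfold prodR; simpl. ring. }
  rewrite (sumR_ext (fun T => a ^ length T * b ^ (S (length l) - length T) * prodR h T)
     (fun T => b * (a ^ length T * b ^ (length l - length T) * prodR h T))).
  2:{ intros T HT. apply sublists_length in HT.
      replace (S (length l) - length T)%nat with (S (length l - length T)) by lia. simpl. ring. }
  rewrite !sumR_scal, IH. unfold prodR; simpl. ring.
Qed.

Lemma inj_length {A B} (f : A -> B) (l : list A) (l' : list B) : NoDup l ->
  (forall x y, In x l -> In y l -> f x = f y -> x = y) -> (forall x, In x l -> In (f x) l') ->
  (length l <= length l')%nat.
Proof.
  intros Hn Hi Hin. rewrite <- (length_map f l). apply NoDup_incl_length.
  - apply NoDup_map_NoDup_ForallPairs; [intros x y Hx Hy; apply Hi; auto | exact Hn].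
  - intros y Hy. apply in_map_iff in Hy. destruct Hy as [x [<- Hx]]. auto.
Qed.

Lemma NoDup_prod {A B} (l1 : list A) (l2 : list B) :
  NoDup l1 -> NoDup l2 -> NoDup (list_prod l1 l2).
Proof.
  induction l1; simpl; intros H1 H2; [constructor|]. inversion H1; subst.
  apply NoDup_app; auto.
  - apply NoDup_map_NoDup_ForallPairs; auto. intros x y _ _ E; inversion E; auto.
  - intros [x y] Ha Hb. apply in_map_iff in Ha. destruct Ha as [z [E _]]. inversion E; subst.
    apply in_prod_iff in Hb. tauto.
Qed.

Lemma length_filter_mono {A} (f g : A -> bool) l : (forall x, In x l -> f x = true -> g x = true) ->
  (length (filter f l) <= length (filter g l))%nat.
Proof.
  induction l; simpl; intros H; auto.
  specialize (IHl (fun x Hx => H x (or_intror Hx))).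
  destruct (f a) eqn:E; [rewrite (H a (or_introl eq_refl) E); simpl; lia|].
  destruct (g a); simpl; lia.
Qed.

Lemma length_filter_or {A} (f g h : A -> bool) l :
  (forall x, In x l -> f x = true -> g x = true \/ h x = true) ->
  (length (filter f l) <= length (filter g l) + length (filter h l))%nat.
Proof.
  induction l; simpl; intros H; auto.
  pose proof (H a (or_introl eq_refl)) as Ha.
  specialize (IHl (fun x Hx => H x (or_intror Hx))).
  destruct (f a), (g a), (h a); simpl; try lia.
  all: destruct (Ha eq_refl); discriminate.
Qed.

Lemma memb_In S i : memb S i = true <-> In i S.
Proof.
  unfold memb. rewrite existsb_exists. split.
  - intros [x [Hx E]]. apply Nat.eqb_eq in E. subst; auto.
  - intros H; exists i; split; auto. apply Nat.eqb_refl.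
Qed.

Lemma In_pairs n i j : In (i, j) (pairs n) <-> (i < j < n)%nat.
Proof.
  unfold pairs. rewrite in_flat_map. split.
  - intros [k [Hk H]]. apply in_map_iff in H. destruct H as [x [E Hx]]. inversion E; subst.
    apply in_seq in Hk. apply in_seq in Hx. lia.
  - intros H. exists j. split; [apply in_seq; lia|].
    apply in_map_iff. exists i; split; auto. apply in_seq; lia.
Qed.

Lemma pairs_NoDup n : NoDup (pairs n).
Proof.
  induction n; [constructor|].
  replace (pairs (S n)) with (pairs n ++ map (fun i => (i, n)) (seq 0 n))
    by (unfold pairs; rewrite seq_S, flat_map_app; simpl; rewrite app_nil_r; reflexivity).
  apply NoDup_app; auto.
  - apply NoDup_map_NoDup_ForallPairs; [intros x y _ _ E; inversion E; auto | apply seq_NoDup].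
  - intros [i j] H1 H2. apply In_pairs in H1. apply in_map_iff in H2. destruct H2 as [x [E _]].
    inversion E; subst. lia.
Qed.

Definition cross (S : list nat) (e : nat * nat) : bool := xorb (memb S (fst e)) (memb S (snd e)).

Lemma boundary_mono n G Rg S : (boundary n G S <= boundary n (graph_union G Rg) S)%nat.
Proof.
  unfold boundary, graph_union. apply length_filter_mono. intros x _ H.
  apply andb_prop in H. destruct H as [H1 H2]. rewrite H1, H2. reflexivity.
Qed.

Lemma boundary_ge_crossing n G Rg S : In Rg (sublists (pairs n)) ->
  (length (filter (cross S) Rg) <= boundary n (graph_union G Rg) S)%nat.
Proof.
  intros HR. unfold boundary. apply NoDup_incl_length.
  - apply NoDup_filter. apply (sublists_NoDup_elem (pairs n)); auto. apply pairs_NoDup.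
  - intros e He. apply filter_In in He. destruct He as [He Hc]. apply filter_In. split.
    + apply (sublists_incl _ _ HR); auto.
    + unfold graph_union.
      assert (Hadj : adj_of Rg (fst e) (snd e) = true).
      { apply existsb_exists. exists e. split; auto. rewrite !Nat.eqb_refl. reflexivity. }
      rewrite Hadj, orb_true_r. exact Hc.
Qed.

Lemma crossing_pairs_count n S : In S (sublists (seq 0 n)) ->
  (length S * (n - length S) <= length (filter (cross S) (pairs n)))%nat.
Proof.
  intros HS.
  assert (NS : NoDup S) by (apply (sublists_NoDup_elem (seq 0 n)); auto; apply seq_NoDup).
  set (C := filter (fun v => negb (memb S v)) (seq 0 n)).
  assert (LC : length C = (n - length S)%nat).
  { assert (LS : length (filter (memb S) (seq 0 n)) = length S).
    { apply Nat.le_antisymm; apply NoDup_incl_length; auto.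
      - apply NoDup_filter, seq_NoDup.
      - intros x Hx. apply filter_In in Hx. apply memb_In; tauto.
      - intros x Hx. apply filter_In. split; [apply (sublists_incl _ _ HS); auto | apply memb_In; auto]. }
    pose proof (filter_length (memb S) (seq 0 n)). rewrite LS, length_seq in H. unfold C. lia. }
  rewrite <- LC, <- length_prod.
  (* an (inside, outside) pair maps injectively to the sorted crossing pair *)
  apply (inj_length (fun p => (Nat.min (fst p) (snd p), Nat.max (fst p) (snd p)))).
  - apply NoDup_prod; auto. apply NoDup_filter, seq_NoDup.
  - intros [a b] [c d] H1 H2 E. apply in_prod_iff in H1, H2. simpl in E. inversion E as [[E1 E2]].
    unfold C in *. destruct H1 as [H1a H1b], H2 as [H2a H2b].
    apply filter_In in H1b, H2b. apply memb_In in H1a, H2a.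
    destruct H1b as [_ H1b], H2b as [_ H2b]. apply negb_true_iff in H1b, H2b.
    assert (a <> b) by (intros ->; congruence).
    assert (c <> d) by (intros ->; congruence).
    assert (a = c /\ b = d \/ a = d /\ b = c) as [[-> ->]|[-> ->]] by lia; auto. congruence.
  - intros [a b] H. apply in_prod_iff in H. destruct H as [Ha Hb]. unfold C in Hb.
    apply filter_In in Hb. destruct Hb as [Hb Hb']. apply negb_true_iff in Hb'.
    pose proof (sublists_incl _ _ HS a Ha) as Ha'. apply in_seq in Ha', Hb.
    assert (Hm : memb S a = true) by (apply memb_In; auto).
    assert (a <> b) by congruence.
    apply filter_In. unfold cross; simpl. rewrite In_pairs.
    destruct (Nat.le_gt_cases a b);
      [rewrite Nat.min_l, Nat.max_r | rewrite Nat.min_r, Nat.max_l]; try lia;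
      rewrite Hm, Hb'; split; auto; lia.
Qed.

Section SpanningTree.
Local Open Scope nat_scope.

Variables (n : nat) (G : nat -> nat -> bool).

Fixpoint reach (k v : nat) : Prop :=
  match k with
  | 0 => v = 0
  | S k => reach k v \/ exists u, reach k u /\ u < n /\ v < n /\ G u v = true
  end.

Lemma reach_exists v : connected n G -> 0 < n -> v < n -> exists k, reach k v.
Proof.
  intros HC Hn Hv. specialize (HC 0 v Hn Hv). apply clos_rt_rtn1 in HC.
  induction HC as [|y z Hyz _ IH]; [exists 0; reflexivity|].
  destruct Hyz as [Hy [Hz Gyz]]. destruct (IH Hy) as [k Hk].
  exists (S k). simpl. right. exists y. auto.
Qed.

Lemma least_witness (P : nat -> Prop) : (exists k, P k) -> exists k, P k /\ forall j, j < k -> ~ P j.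
Proof.
  intros [k Hk]. revert Hk. pattern k; apply (well_founded_ind lt_wf); clear k. intros k IH Hk.
  destruct (classic (exists j, j < k /\ P j)) as [[j [Hj Pj]]|Hno]; [apply (IH j Hj Pj)|].
  exists k. split; auto. intros j Hj Pj. apply Hno. exists j; auto.
Qed.

(* A rooted spanning tree of G: every non-root vertex v has a G-neighbour [par v]
   of strictly smaller depth [d]. *)
Definition spanning_tree (par d : nat -> nat) : Prop :=
  forall v, v < n -> v <> 0 -> par v < n /\ G v (par v) = true /\ d (par v) < d v.

(* Breadth-first search: take d v the distance from the root and par v a neighbour
   at distance d v - 1. *)
Lemma spanning_tree_exists : simple_graph G -> connected n G -> 0 < n ->
  exists par d, spanning_tree par d.
Proof.
  intros [Gsym _] HC Hn.
  assert (Hd : forall v, exists k, v < n -> reach k v /\ forall j, j < k -> ~ reach j v).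
  { intros v. destruct (classic (v < n)) as [Hv|Hv]; [|exists 0; intros; contradiction].
    destruct (least_witness _ (reach_exists v HC Hn Hv)) as [k Hk]. exists k; auto. }
  set (d := fun v => proj1_sig (constructive_indefinite_description _ (Hd v))).
  assert (Hdp : forall v, v < n -> reach (d v) v /\ forall j, j < d v -> ~ reach j v).
  { intros v Hv. unfold d. destruct (constructive_indefinite_description _ (Hd v)) as [k Hk]. auto. }
  assert (Hp : forall v, exists u, v < n -> v <> 0 -> u < n /\ G v u = true /\ d u < d v).
  { intros v. destruct (classic (v < n /\ v <> 0)) as [[Hv H0]|Hv];
      [|exists 0; intros; exfalso; auto].
    destruct (Hdp v Hv) as [W M]. destruct (d v) as [|j] eqn:E; simpl in W; [contradiction|].
    destruct W as [W|[u [Wu [Hu [_ Guv]]]]]; [exfalso; apply (M j); auto|].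
    exists u. intros _ _. rewrite Gsym. repeat split; auto.
    destruct (Nat.le_gt_cases (d u) j); try lia. exfalso. apply (proj2 (Hdp u Hu) j); auto. }
  exists (fun v => proj1_sig (constructive_indefinite_description _ (Hp v))), d.
  intros v Hv H0. destruct (constructive_indefinite_description _ (Hp v)) as [u Hu]. simpl. auto.
Qed.

Variables (par d : nat -> nat).
Hypothesis T : spanning_tree par d.

Lemma spanning_tree_ind (P : nat -> Prop) :
  (0 < n -> P 0) -> (forall v, v < n -> v <> 0 -> P (par v) -> P v) -> forall v, v < n -> P v.
Proof.
  intros H0 Hs.
  assert (forall m v, d v < m -> v < n -> P v).
  { induction m; intros v Hd Hv; [lia|]. destruct (Nat.eq_dec v 0) as [->|Hne]; auto.
    destruct (T v Hv Hne) as [Hp [_ Hdp]]. apply Hs; auto. apply IHm; auto; lia. }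
  intros v Hv. apply (H (S (d v))); auto.
Qed.

(* The cut encoding of S: the root if it lies in S, and every other vertex v whose
   tree edge {v, par v} crosses S. *)
Definition cut_mark (S : list nat) (v : nat) : bool :=
  if v =? 0 then memb S 0 else xorb (memb S v) (memb S (par v)).

Definition cut_code (S : list nat) : list nat := filter (cut_mark S) (seq 0 n).

(* If all cut marks agree then membership agrees everywhere (propagate down the tree). *)
Lemma cut_mark_determines S S' :
  (forall v, v < n -> cut_mark S v = cut_mark S' v) -> forall v, v < n -> memb S v = memb S' v.
Proof.
  intros E. apply spanning_tree_ind.
  - intros Hn. specialize (E 0 Hn). unfold cut_mark in E. simpl in E. exact E.
  - intros v Hv H0 IH. specialize (E v Hv). unfold cut_mark in E.
    apply Nat.eqb_neq in H0. rewrite H0, IH in E.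
    destruct (memb S v), (memb S' v), (memb S' (par v)); simpl in E; congruence.
Qed.

Lemma cut_code_inj S S' : In S (sublists (seq 0 n)) -> In S' (sublists (seq 0 n)) ->
  cut_code S = cut_code S' -> S = S'.
Proof.
  intros HS HS' E. unfold cut_code in E. rewrite filter_ext_in_iff in E.
  assert (M := cut_mark_determines S S' (fun v Hv => E v (proj2 (in_seq _ _ _) (conj (Nat.le_0_l v) Hv)))).
  apply (sublists_ext (seq 0 n)); auto; [apply seq_NoDup|].
  intros x Hx. apply in_seq in Hx. rewrite <- !memb_In. rewrite M by lia. tauto.
Qed.

Lemma cut_marks_le_boundary S : simple_graph G ->
  length (filter (fun v => cut_mark S v && negb (v =? 0)) (seq 0 n)) <= boundary n G S.
Proof.
  intros [Gsym _]. unfold boundary.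
  apply (inj_length (fun v => (Nat.min v (par v), Nat.max v (par v)))).
  - apply NoDup_filter, seq_NoDup.
  - intros v w Hv Hw E. apply filter_In in Hv, Hw. destruct Hv as [Hv Fv], Hw as [Hw Fw].
    apply andb_prop in Fv, Fw. destruct Fv as [_ Fv], Fw as [_ Fw].
    apply negb_true_iff, Nat.eqb_neq in Fv, Fw. apply in_seq in Hv, Hw.
    destruct (T v ltac:(lia) Fv) as [_ [_ Dv]]. destruct (T w ltac:(lia) Fw) as [_ [_ Dw]].
    inversion E as [[E1 E2]].
    assert (v = w \/ (v = par w /\ w = par v)) as [|[X Y]] by lia; auto.
    exfalso. rewrite <- X, <- Y in *. lia.
  - intros v Hv. apply filter_In in Hv. destruct Hv as [Hv Fv]. apply andb_prop in Fv.
    destruct Fv as [Fv N]. apply negb_true_iff, Nat.eqb_neq in N. apply in_seq in Hv.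
    destruct (T v ltac:(lia) N) as [Hp [Gp Dp]].
    assert (par v <> v) by (intro X; rewrite X in Dp; lia).
    unfold cut_mark in Fv. apply Nat.eqb_neq in N. rewrite N in Fv.
    apply filter_In. split; [apply In_pairs; simpl; lia|]. simpl.
    assert (Hc : v < par v \/ par v < v) by lia. destruct Hc.
    + rewrite Nat.min_l, Nat.max_r by lia. rewrite Gp, Fv. reflexivity.
    + rewrite Nat.min_r, Nat.max_l by lia. rewrite Gsym, Gp, xorb_comm, Fv. reflexivity.
Qed.

Lemma cut_code_length S : simple_graph G -> length (cut_code S) <= boundary n G S + 1.
Proof.
  intros HG. unfold cut_code.
  eapply Nat.le_trans.
  { apply (length_filter_or _ (fun v => cut_mark S v && negb (v =? 0)) (fun v => v =? 0)).
    intros x _ H. destruct (x =? 0); simpl; auto. rewrite H; auto. }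
  pose proof (cut_marks_le_boundary S HG).
  assert (length (filter (fun v => v =? 0) (seq 0 n)) <= 1).
  { change 1 with (length [0]). apply NoDup_incl_length; [apply NoDup_filter, seq_NoDup|].
    intros x Hx. apply filter_In in Hx. destruct Hx as [_ Hx]. apply Nat.eqb_eq in Hx. left; auto. }
  lia.
Qed.

Lemma boundary_pos S : simple_graph G -> In S (sublists (seq 0 n)) ->
  0 < length S -> length S < n -> 1 <= boundary n G S.
Proof.
  intros HG HS H1 H2. destruct (Nat.le_gt_cases 1 (boundary n G S)) as [|H]; auto. exfalso.
  pose proof (cut_marks_le_boundary S HG) as FE.
  assert (Z : forall v, v < n -> v <> 0 -> cut_mark S v = false).
  { intros v Hv H0. destruct (cut_mark S v) eqn:F; auto. exfalso.
    assert (In v (filter (fun v => cut_mark S v && negb (v =? 0)) (seq 0 n))).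
    { apply filter_In. split; [apply in_seq; lia|]. rewrite F. apply Nat.eqb_neq in H0. rewrite H0; auto. }
    destruct (filter (fun v => cut_mark S v && negb (v =? 0)) (seq 0 n)); simpl in *; [auto|lia]. }
  assert (M : forall v, v < n -> memb S v = memb S 0).
  { apply spanning_tree_ind; auto. intros v Hv H0 IH. specialize (Z v Hv H0). unfold cut_mark in Z.
    apply Nat.eqb_neq in H0. rewrite H0 in Z. rewrite <- IH.
    destruct (memb S v), (memb S (par v)); simpl in *; congruence. }
  destruct (memb S 0) eqn:E.
  - assert (n <= length S); [|lia]. rewrite <- (length_seq n 0).
    apply NoDup_incl_length; [apply seq_NoDup|].
    intros x Hx. apply in_seq in Hx. apply memb_In. rewrite M; auto; lia.
  - destruct S as [|x S']; [simpl in H1; lia|].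
    assert (Hx : x < n) by (pose proof (sublists_incl _ _ HS x (or_introl eq_refl)) as Hx; apply in_seq in Hx; lia).
    specialize (M x Hx). assert (memb (x :: S') x = true) by (apply memb_In; left; auto). congruence.
Qed.

End SpanningTree.

Lemma exp_le x y : x <= y -> exp x <= exp y.
Proof. intros H. destruct (Req_dec x y) as [->|]; [lra | left; apply exp_increasing; lra]. Qed.

Lemma ln_le_mono x y : 0 < x -> x <= y -> ln x <= ln y.
Proof. intros Hx H. destruct (Req_dec x y) as [->|]; [lra | left; apply ln_increasing; lra]. Qed.

Lemma ln_nonneg x : 1 <= x -> 0 <= ln x.
Proof. intros H. rewrite <- ln_1. apply ln_le_mono; lra. Qed.

Lemma div_ge1 a b : 0 < b <= a -> 1 <= a / b.
Proof. intros H. apply (Rmult_le_reg_r b); [lra|]. unfold Rdiv. rewrite Rmult_assoc, Rinv_l by lra. lra. Qed.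

Lemma exp1_ge2 : 2 <= exp 1.
Proof. pose proof (exp_ineq1_le 1). lra. Qed.

Lemma exp_pow x m : exp x ^ m = exp (INR m * x).
Proof.
  induction m; simpl; [rewrite Rmult_0_l, exp_0; auto|].
  rewrite IHm, <- exp_plus. f_equal. destruct m; simpl; ring.
Qed.

Lemma ln_ratio_ge1 N x : 0 < x <= N -> 1 <= ln (exp 1 * N / x).
Proof.
  intros H. replace (exp 1 * N / x) with (exp 1 * (N / x)) by (field; lra).
  rewrite ln_mult, ln_exp by (try apply exp_pos; apply Rdiv_lt_0_compat; lra).
  pose proof (ln_nonneg (N / x) (div_ge1 N x H)). lra.
Qed.

Definition weight (n : nat) (p : R) (Rg : list (nat * nat)) : R :=
  p ^ length Rg * (1 - p) ^ (length (pairs n) - length Rg).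

Lemma prob_Gnp_sumR n p E : prob_Gnp n p E =
  sumR (fun Rg => if excluded_middle_informative (E Rg) then weight n p Rg else 0) (sublists (pairs n)).
Proof. reflexivity. Qed.

Lemma weight_nonneg n p Rg : 0 <= p <= 1 -> 0 <= weight n p Rg.
Proof. intros Hp. unfold weight. apply Rmult_le_pos; apply pow_le; lra. Qed.

Lemma weight_total n p : sumR (weight n p) (sublists (pairs n)) = 1.
Proof.
  pose proof (sum_sublists_binomial p (1 - p) (fun _ => 1) (pairs n)) as H.
  rewrite (sumR_ext _ (weight n p)) in H.
  - rewrite H, prodR_const. replace (p * 1 + (1 - p)) with 1 by ring. apply pow1.
  - intros; unfold weight; rewrite prodR_const, pow1; ring.
Qed.

Lemma prob_le1 n p E : 0 <= p <= 1 -> prob_Gnp n p E <= 1.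
Proof.
  intros Hp. rewrite prob_Gnp_sumR, <- (weight_total n p). apply sumR_le. intros x _.
  destruct (excluded_middle_informative (E x)); [lra | apply weight_nonneg; auto].
Qed.

Lemma prob_mono n p (E E' : list (nat * nat) -> Prop) : 0 <= p <= 1 ->
  (forall Rg, In Rg (sublists (pairs n)) -> E Rg -> E' Rg) -> prob_Gnp n p E <= prob_Gnp n p E'.
Proof.
  intros Hp H. rewrite !prob_Gnp_sumR. apply sumR_le. intros x Hx.
  destruct (excluded_middle_informative (E x)), (excluded_middle_informative (E' x));
    try lra; [exfalso; auto | apply weight_nonneg; auto].
Qed.

(* Exponential moment of the number of marked edges (those with [cr e]) in the
   random graph: E[exp(-X)] = prod over pairs of (p e^{-[cr e]} + 1 - p). *)
Definition exp_moment_factor (cr : nat * nat -> bool) (e : nat * nat) : R :=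
  if cr e then exp (-1) else 1.

Lemma prodR_exp_moment_factor cr Rg :
  prodR (exp_moment_factor cr) Rg = exp (- INR (length (filter cr Rg))).
Proof.
  induction Rg; unfold prodR in *; simpl; [rewrite Ropp_0, exp_0; auto|].
  rewrite IHRg. unfold exp_moment_factor. destruct (cr a); cbn -[INR exp]; [|ring].
  rewrite S_INR, <- exp_plus. f_equal. ring.
Qed.

(* Chernoff-type bound: each marked pair contributes a factor
   1 - p (1 - e^{-1}) <= exp(-p/2). *)
Lemma exp_moment_bound p cr l : 0 <= p <= 1 ->
  prodR (fun e => p * exp_moment_factor cr e + (1 - p)) l
  <= exp (- (p / 2) * INR (length (filter cr l))).
Proof.
  intros Hp.
  assert (He : 0 < exp (-1) <= / 2).
  { assert (E1 : exp (-1) * exp 1 = 1)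
      by (rewrite <- exp_plus; replace (-1 + 1) with 0 by ring; apply exp_0).
    pose proof exp1_ge2. pose proof (exp_pos (-1)). split; [lra|nra]. }
  induction l; unfold prodR in *; simpl; [rewrite Rmult_0_r, exp_0; lra|].
  assert (P0 : 0 <= fold_right Rmult 1 (map (fun e => p * exp_moment_factor cr e + (1 - p)) l)).
  { clear IHl. induction l; simpl; [lra|].
    apply Rmult_le_pos; auto. unfold exp_moment_factor; destruct (cr a0); nra. }
  unfold exp_moment_factor at 1. destruct (cr a); cbn -[INR exp]; [|nra].
  rewrite S_INR. replace (- (p / 2) * (INR (length (filter cr l)) + 1)) with
    (- (p/2) + - (p / 2) * INR (length (filter cr l))) by ring. rewrite exp_plus.
  apply Rmult_le_compat; try nra. pose proof (exp_ineq1_le (- (p / 2))). nra.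
Qed.

Lemma union_bound {X : Type} n p (E : list (nat * nat) -> Prop) (Bs : list X) (t : X -> R)
  (cr : X -> nat * nat -> bool) : 0 <= p <= 1 ->
  (forall Rg, In Rg (sublists (pairs n)) -> ~ E Rg ->
     exists S, In S Bs /\ INR (length (filter (cr S) Rg)) < t S) ->
  1 - sumR (fun S => exp (t S) * exp (- (p / 2) * INR (length (filter (cr S) (pairs n))))) Bs
  <= prob_Gnp n p E.
Proof.
  intros Hp Hcov.
  (* pointwise: the indicator of E dominates 1 - sum_S e^{t S - X_S} *)
  assert (Pt : forall Rg, In Rg (sublists (pairs n)) ->
    weight n p Rg - sumR (fun S => exp (t S) * (weight n p Rg * prodR (exp_moment_factor (cr S)) Rg)) Bs <=
    (if excluded_middle_informative (E Rg) then weight n p Rg else 0)).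
  { intros Rg HR. assert (W := weight_nonneg n p Rg Hp).
    assert (Nn : forall S, In S Bs ->
               0 <= exp (t S) * (weight n p Rg * prodR (exp_moment_factor (cr S)) Rg)).
    { intros S _. rewrite prodR_exp_moment_factor.
      apply Rmult_le_pos; [left; apply exp_pos | apply Rmult_le_pos; auto; left; apply exp_pos]. }
    destruct (excluded_middle_informative (E Rg)) as [HE|HE]; [pose proof (sumR_nonneg _ Bs Nn); lra|].
    destruct (Hcov Rg HR HE) as [S [HS Ht]].
    pose proof (sumR_ge_term _ Bs S Nn HS) as H. cbv beta in H. rewrite prodR_exp_moment_factor in H.
    assert (1 <= exp (t S) * exp (- INR (length (filter (cr S) Rg)))).
    { rewrite <- exp_plus, <- exp_0. apply exp_le. lra. }
    nra. }
  rewrite prob_Gnp_sumR. eapply Rle_trans; [|apply (sumR_le _ _ _ Pt)].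
  rewrite sumR_minus, weight_total, sumR_swap.
  enough (sumR (fun S => sumR (fun Rg => exp (t S) * (weight n p Rg * prodR (exp_moment_factor (cr S)) Rg))
                                (sublists (pairs n))) Bs <=
     sumR (fun S => exp (t S) * exp (- (p / 2) * INR (length (filter (cr S) (pairs n))))) Bs) by lra.
  apply sumR_le. intros S _. rewrite sumR_scal. apply Rmult_le_compat_l; [left; apply exp_pos|].
  eapply Rle_trans; [|apply exp_moment_bound; auto]. right. rewrite <- sum_sublists_binomial. reflexivity.
Qed.

Definition rltb (a b : R) : bool := if Rlt_dec a b then true else false.

Lemma rltb_true a b : rltb a b = true <-> a < b.
Proof. unfold rltb. destruct (Rlt_dec a b); split; auto; discriminate. Qed.

(* Subsets of l of size < T number at most exp(s T + |l| e^{-s}) for any s >= 0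
   (Markov's inequality applied to the generating function). *)
Lemma count_small_subsets (l : list nat) (T s : R) : 0 <= s ->
  INR (length (filter (fun F => rltb (INR (length F)) T) (sublists l)))
  <= exp (s * T + INR (length l) * exp (- s)).
Proof.
  intros Hs. rewrite length_filter_sumR.
  eapply Rle_trans.
  { apply (sumR_le _ (fun F => exp (s * T) *
             (1 ^ length F * 1 ^ (length l - length F) * prodR (fun _ => exp (- s)) F))).
    intros F _. rewrite !pow1, prodR_const, exp_pow, !Rmult_1_l, <- exp_plus.
    destruct (rltb (INR (length F)) T) eqn:HF; [|left; apply exp_pos].
    apply rltb_true in HF. rewrite <- exp_0 at 1. apply exp_le. nra. }
  rewrite sumR_scal, sum_sublists_binomial, prodR_const, exp_plus.
  apply Rmult_le_compat_l; [left; apply exp_pos|].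
  rewrite <- exp_pow. apply pow_incr. split.
  - pose proof (exp_pos (-s)); lra.
  - pose proof (exp_ineq1_le (exp (- s))). lra.
Qed.

(* For a size x of a bad set, with L = ln(e N/x),
   t = d x / L > 1 and the choice s = ln(N/(th x)), the logarithm of
   (#subsets of size < t+1) * e^{t - c0 x} is at most -6 d x. *)
Lemma class_exponent_bound (N x d th c0 t : R) :
  1 <= x <= N -> 0 < th <= 1 -> 0 < d ->
  d * (3 + 2 * ln (/ th)) <= c0 / 4 -> th <= c0 / 4 ->
  t = d / ln (exp 1 * N / x) * x -> 1 < t ->
  let s := ln (N / (th * x)) in
  s * (t + 1) + N * exp (- s) + (t - c0 * x) <= - (6 * d * x).
Proof.
  intros Hx Hth Hd Hdc Htc Ht Ht1 s.
  set (L := ln (exp 1 * N / x)) in *. set (Lam := ln (/ th)) in *.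
  assert (HL : 1 <= L) by (apply ln_ratio_ge1; lra).
  assert (HLam : 0 <= Lam) by (apply ln_nonneg; rewrite <- Rinv_1; apply Rinv_le_contravar; lra).
  assert (Hthx : 0 < th * x) by nra.
  assert (Hdx : 0 < d * x) by nra.
  assert (Hs0 : 0 <= s) by (apply ln_nonneg, div_ge1; nra).
  assert (Hs : s = L + Lam - 1).
  { assert (E : exp 1 * N / x * / th = exp 1 * (N / (th * x))) by (field; lra).
    assert (E2 : ln (exp 1 * N / x * / th) = L + Lam).
    { assert (0 < exp 1) by apply exp_pos.
      apply ln_mult; [apply Rdiv_lt_0_compat; nra | apply Rinv_0_lt_compat; lra]. }
    rewrite E, ln_mult, ln_exp in E2 by (try apply exp_pos; apply Rdiv_lt_0_compat; lra).
    unfold s. lra. }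
  assert (Hes : N * exp (- s) = th * x).
  { rewrite exp_Ropp. unfold s. rewrite exp_ln by (apply Rdiv_lt_0_compat; lra). field. lra. }
  assert (Hte : t <= d * x).
  { rewrite Ht. replace (d / L * x) with (d * x / L) by (field; lra).
    apply (Rmult_le_reg_r L); [lra|]. unfold Rdiv. rewrite Rmult_assoc, Rinv_l by lra. nra. }
  assert (Hst : s * t <= d * x * (1 + Lam)).
  { rewrite Ht, Hs. replace ((L + Lam - 1) * (d / L * x)) with (d * x * ((L + Lam - 1) / L)) by (field; lra).
    apply Rmult_le_compat_l; [nra|]. apply (Rmult_le_reg_r L); [lra|].
    unfold Rdiv. rewrite Rmult_assoc, Rinv_l by lra. nra. }
  (* s (t + 1) <= 2 s t since t > 1 *)
  rewrite Hes. nra.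
Qed.

(* If d x > ln(e N/x) then e^{-6 d x} <= 1/(d^3 N^3): indeed Y = e^{d x} satisfies
   Y >= e N/x and Y >= e d x, hence Y^2 >= N d. *)
Lemma exp_neg_class_bound (N x d : R) :
  1 <= x <= N -> 0 < d -> ln (exp 1 * N / x) < d * x -> exp (- (6 * d * x)) <= / (d ^ 3 * N ^ 3).
Proof.
  intros Hx Hd HdxL.
  assert (He1 := exp1_ge2).
  set (Y := exp (d * x)).
  assert (HA : 0 < exp 1 * N / x) by (apply Rdiv_lt_0_compat; [apply Rmult_lt_0_compat|]; lra).
  assert (HY1 : exp 1 * N / x <= Y).
  { unfold Y. rewrite <- (exp_ln (exp 1 * N / x)) by auto. apply exp_le. lra. }
  assert (HY2 : exp 1 * (d * x) <= Y).
  { unfold Y. replace (d * x) with (1 + (d * x - 1)) at 2 by ring. rewrite exp_plus.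
    apply Rmult_le_compat_l; [lra|]. pose proof (exp_ineq1_le (d * x - 1)). lra. }
  assert (HYY : exp 1 * exp 1 * (N * d) <= Y * Y).
  { replace (exp 1 * exp 1 * (N * d)) with (exp 1 * N / x * (exp 1 * (d * x))) by (field; lra).
    apply Rmult_le_compat; [lra | apply Rmult_le_pos; [lra|nra] | exact HY1 | exact HY2]. }
  assert (Hpos : 0 < d ^ 3 * N ^ 3) by (apply Rmult_lt_0_compat; apply pow_lt; lra).
  replace (exp (- (6 * d * x))) with (/ ((Y * Y) ^ 3)).
  - apply Rinv_le_contravar; auto. replace (d ^ 3 * N ^ 3) with ((N * d) ^ 3) by ring.
    apply pow_incr. assert (0 < N * d) by nra. assert (1 <= exp 1 * exp 1) by nra.
    split; [lra|]. apply Rle_trans with (exp 1 * exp 1 * (N * d)); [nra | exact HYY].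
  - rewrite exp_Ropp. f_equal. unfold Y. rewrite <- exp_plus, exp_pow. f_equal. simpl. ring.
Qed.

Definition threshold (n : nat) (d : R) (k : nat) : R := d / ln (exp 1 * INR n / INR k) * INR k.

Definition expansion_event (n : nat) (G : nat -> nat -> bool) (b d : R) (Rg : list (nat * nat)) : Prop :=
  forall S, In S (sublists (seq 0 n)) -> (0 < length S)%nat -> INR (length S) <= b * INR n ->
    INR (boundary n (graph_union G Rg) S) >= threshold n d (length S).

Definition bad_sets (n : nat) (G : nat -> nat -> bool) (b d : R) : list (list nat) :=
  filter (fun S => (0 <? length S)%nat && negb (rltb (b * INR n) (INR (length S)))
                   && rltb (INR (boundary n G S)) (threshold n d (length S)))
         (sublists (seq 0 n)).

Lemma In_bad_sets n G b d S : In S (bad_sets n G b d) <->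
  In S (sublists (seq 0 n)) /\ (0 < length S)%nat /\ INR (length S) <= b * INR n /\
  INR (boundary n G S) < threshold n d (length S).
Proof.
  unfold bad_sets. rewrite filter_In, !andb_true_iff, negb_true_iff, Nat.ltb_lt, !rltb_true.
  split; intros [H1 H2]; split; auto.
  - destruct H2 as [[Ha Hb] Hc]. repeat split; auto. apply Rnot_lt_le. intros Hlt.
    apply rltb_true in Hlt. congruence.
  - destruct H2 as [Ha [Hb Hc]]. repeat split; auto.
    destruct (rltb (b * INR n) (INR (length S))) eqn:E; auto. apply rltb_true in E. lra.
Qed.

Lemma expansion_prob_lower n G b d p : 0 <= p <= 1 ->
  1 - sumR (fun S => exp (threshold n d (length S)) *
                     exp (- (p / 2) * INR (length (filter (cross S) (pairs n))))) (bad_sets n G b d)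
  <= prob_Gnp n p (expansion_event n G b d).
Proof.
  intros Hp. apply (union_bound n p _ _ (fun S => threshold n d (length S)) cross Hp).
  intros Rg HR HE. apply NNPP. intros Hno. apply HE. intros S HS H0 Hbs.
  apply Rnot_lt_ge. intros Hlt. apply Hno. exists S. split.
  - apply In_bad_sets. repeat split; auto.
    eapply Rle_lt_trans; [|exact Hlt]. apply le_INR, boundary_mono.
  - eapply Rle_lt_trans; [|exact Hlt]. apply le_INR, boundary_ge_crossing; auto.
Qed.

(* A set of size k <= b n has k (n - k) >= (1 - b) n k crossing pairs, so with
   p = eps/n its exponential moment is at most e^{-c0 k}, c0 = eps (1-b)/2. *)
Lemma crossing_moment_bound (eps b : R) n S : 0 < eps -> 0 < INR n ->
  In S (sublists (seq 0 n)) -> INR (length S) <= b * INR n ->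
  exp (- (eps / INR n / 2) * INR (length (filter (cross S) (pairs n))))
  <= exp (- (eps * (1 - b) / 2) * INR (length S)).
Proof.
  intros Heps HN HS HSb. apply exp_le.
  assert (Hk : (length S <= n)%nat) by (pose proof (sublists_length _ _ HS) as H; rewrite length_seq in H; auto).
  pose proof (le_INR _ _ (crossing_pairs_count n S HS)) as Hcc.
  rewrite mult_INR, minus_INR in Hcc by auto.
  set (N := INR n) in *. set (k := INR (length S)) in *.
  set (cc := INR (length (filter (cross S) (pairs n)))) in *.
  assert (Hk0 : 0 <= k) by apply pos_INR.
  enough (eps * (1 - b) / 2 * k <= eps / N / 2 * cc) by lra.
  apply Rle_trans with (eps / N / 2 * (k * (N - k))).
  - replace (eps / N / 2 * (k * (N - k))) with (eps * k / (2 * N) * (N - k)) by (field; lra).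
    replace (eps * (1 - b) / 2 * k) with (eps * k / (2 * N) * ((1 - b) * N)) by (field; lra).
    apply Rmult_le_compat_l; [|lra].
    unfold Rdiv; apply Rmult_le_pos; [nra | left; apply Rinv_0_lt_compat; lra].
  - apply Rmult_le_compat_l; [|lra]. unfold Rdiv. apply Rmult_le_pos; [|lra].
    apply Rmult_le_pos; [lra | left; apply Rinv_0_lt_compat; lra].
Qed.

(* Via the cut encoding along a spanning tree, bad sets of size k are no more
   numerous than subsets of [n] of size < t(k) + 1. *)
Lemma bad_class_count n G b d par dd k :
  simple_graph G -> spanning_tree n G par dd ->
  (length (filter (fun S => length S =? k)%nat (bad_sets n G b d))
   <= length (filter (fun F => rltb (INR (length F)) (threshold n d k + 1)) (sublists (seq 0 n))))%nat.
Proof.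
  intros HG T. apply (inj_length (cut_code n par)).
  - apply NoDup_filter, NoDup_filter, sublists_NoDup, seq_NoDup.
  - intros S S' HS HS' E. apply filter_In in HS, HS'.
    destruct HS as [HS _], HS' as [HS' _].
    apply In_bad_sets in HS, HS'. apply (cut_code_inj n G par dd T S S'); tauto.
  - intros S HS. apply filter_In in HS. destruct HS as [HS Hk]. apply Nat.eqb_eq in Hk.
    apply In_bad_sets in HS. destruct HS as [_ [_ [_ Hlt]]].
    apply filter_In. split; [apply filter_in_sublists|]. apply rltb_true.
    pose proof (le_INR _ _ (cut_code_length n G par dd T S HG)) as Z.
    rewrite plus_INR in Z. simpl in Z. subst k. lra.
Qed.

Section FailureProbability.

(* Constants: c0 = eps (1-b)/2 is the expansion rate supplied by the random edges,
   th <= c0/4 and d (3 + 2 ln(1/th)) <= c0/4. *)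
Variables (eps b c0 th d : R).
Hypotheses (Heps : 0 < eps) (Hb : b < 1) (Hc0 : c0 = eps * (1 - b) / 2)
  (Hth : 0 < th <= 1) (Htc : th <= c0 / 4) (Hd : 0 < d) (Hdc : d * (3 + 2 * ln (/ th)) <= c0 / 4).

Lemma bad_class_bound n G k : simple_graph G -> connected n G -> (1 <= n)%nat ->
  sumR (fun S => exp (threshold n d (length S) - c0 * INR (length S)))
       (filter (fun S => length S =? k)%nat (bad_sets n G b d))
  <= / (d ^ 3 * INR n ^ 3).
Proof.
  intros HG HC Hn. set (N := INR n).
  assert (HN1 : 1 <= N) by (apply (le_INR 1); auto).
  assert (Hpos : 0 < d ^ 3 * N ^ 3) by (apply Rmult_lt_0_compat; apply pow_lt; lra).
  destruct (filter (fun S => length S =? k)%nat (bad_sets n G b d)) as [|S0 Sk'] eqn:ESk.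
  { unfold sumR; simpl. left; apply Rinv_0_lt_compat; auto. }
  assert (HS0 : In S0 (filter (fun S => length S =? k)%nat (bad_sets n G b d))) by (rewrite ESk; left; auto).
  apply filter_In in HS0. destruct HS0 as [HS0 Hl0]. apply Nat.eqb_eq in Hl0.
  apply In_bad_sets in HS0. destruct HS0 as [HS0 [H0 [HSb Hlt]]]. rewrite Hl0 in *.
  fold N in HSb. set (x := INR k) in *. set (t := threshold n d k) in *.
  assert (Hkn : (k < n)%nat) by (apply INR_lt; fold N x; assert (0 < (1 - b) * N) by (apply Rmult_lt_0_compat; lra); nra).
  destruct (spanning_tree_exists n G HG HC ltac:(lia)) as [par [dd T]].
  (* a bad set is nonempty and proper, so it has a G-boundary edge: t > 1 *)
  assert (Ht1 : 1 < t).
  { pose proof (le_INR _ _ (boundary_pos n G par dd T S0 HG HS0 ltac:(lia) ltac:(lia))). simpl in *. lra. }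
  assert (Hx : 1 <= x <= N) by (split; [apply (le_INR 1); lia | apply le_INR; lia]).
  rewrite <- ESk, (sumR_ext _ (fun _ => exp (t - c0 * x))).
  2:{ intros S HS. apply filter_In in HS. destruct HS as [_ E]. apply Nat.eqb_eq in E. rewrite E. reflexivity. }
  rewrite sumR_const.
  set (s := ln (N / (th * x))).
  assert (Hs0 : 0 <= s) by (apply ln_nonneg, div_ge1; nra).
  pose proof (le_INR _ _ (bad_class_count n G b d par dd k HG T)) as Hcount.
  pose proof (count_small_subsets (seq 0 n) (t + 1) s Hs0) as Hsmall. rewrite length_seq in Hsmall.
  pose proof (class_exponent_bound N x d th c0 t Hx Hth Hd Hdc Htc eq_refl Ht1) as Hexp.
  assert (HLdx : ln (exp 1 * N / x) < d * x).
  { assert (HL := ln_ratio_ge1 N x ltac:(lra)).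
    unfold t, threshold in Ht1. fold N x in Ht1.
    replace (d / ln (exp 1 * N / x) * x) with (d * x / ln (exp 1 * N / x)) in Ht1 by (field; lra).
    apply (Rmult_lt_compat_r (ln (exp 1 * N / x))) in Ht1; [|lra].
    replace (d * x / ln (exp 1 * N / x) * ln (exp 1 * N / x)) with (d * x) in Ht1 by (field; lra).
    lra. }
  eapply Rle_trans; [|apply (exp_neg_class_bound N x d Hx Hd HLdx)].
  eapply Rle_trans; [|apply exp_le, Hexp]. rewrite (exp_plus _ (t - c0 * x)).
  fold s. change (threshold n d k) with t in Hcount. change (INR n) with N in Hsmall.
  apply Rmult_le_compat_r; [left; apply exp_pos | lra].
Qed.

Lemma expansion_prob_bound n G : simple_graph G -> connected n G -> (1 <= n)%nat -> eps <= INR n ->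
  1 - INR (n + 1) * / (d ^ 3 * INR n ^ 3) <= prob_Gnp n (eps / INR n) (expansion_event n G b d).
Proof.
  intros HG HC Hn HepsN. set (N := INR n) in *.
  assert (HN1 : 1 <= N) by (apply (le_INR 1); auto).
  assert (Hp : 0 <= eps / N <= 1).
  { split; [left; apply Rdiv_lt_0_compat; lra|]. apply (Rmult_le_reg_r N); [lra|].
    unfold Rdiv; rewrite Rmult_assoc, Rinv_l by lra. lra. }
  eapply Rle_trans; [|apply (expansion_prob_lower n G b d _ Hp)].
  enough (sumR (fun S => exp (threshold n d (length S) - c0 * INR (length S))) (bad_sets n G b d)
          <= INR (n + 1) * / (d ^ 3 * N ^ 3)) as Hsum.
  { enough (sumR (fun S => exp (threshold n d (length S)) *
                   exp (- (eps / N / 2) * INR (length (filter (cross S) (pairs n))))) (bad_sets n G b d)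
            <= sumR (fun S => exp (threshold n d (length S) - c0 * INR (length S))) (bad_sets n G b d)) by lra.
    apply sumR_le. intros S HS. apply In_bad_sets in HS. destruct HS as [HS [_ [HSb _]]].
    unfold Rminus. rewrite exp_plus. apply Rmult_le_compat_l; [left; apply exp_pos|].
    replace (- (c0 * INR (length S))) with (- (eps * (1 - b) / 2) * INR (length S)) by (rewrite Hc0; ring).
    apply crossing_moment_bound; auto. change (INR n) with N; lra. }
  rewrite (sumR_by_length _ _ n).
  - rewrite <- (length_seq (n + 1) 0) at 2. rewrite <- sumR_const.
    apply sumR_le. intros k _. apply bad_class_bound; auto.
  - intros S HS. apply In_bad_sets in HS. pose proof (sublists_length _ _ (proj1 HS)) as H.
    rewrite length_seq in H. auto.
Qed.

End FailureProbability.

Lemma Un_cv_one_squeeze (u : nat -> R) (d : R) (n0 : nat) : 0 < d ->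
  (forall n, (n0 <= n)%nat -> 1 - INR (n + 1) * / (d ^ 3 * INR n ^ 3) <= u n /\ u n <= 1) ->
  Un_cv u 1.
Proof.
  intros Hd H e He.
  assert (Hd3 : 0 < d ^ 3) by (apply pow_lt; lra).
  destruct (INR_archimed (e * d ^ 3) 2) as [M HM]; [nra|].
  exists (Nat.max n0 (Nat.max M 1)). intros n Hn.
  destruct (H n ltac:(lia)) as [H1 H2].
  assert (HnM : INR M <= INR n) by (apply le_INR; lia).
  assert (Hn1 : 1 <= INR n) by (apply (le_INR 1); lia).
  set (m := INR n) in *.
  (* (n+1)/(d^3 n^3) <= 2/(d^3 n^2) < e since e d^3 n > 2 *)
  assert (Hq : INR (n + 1) * / (d ^ 3 * m ^ 3) < e).
  { rewrite plus_INR. fold m. simpl INR.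
    assert (Hp : 0 < d ^ 3 * m ^ 3) by (apply Rmult_lt_0_compat; auto; apply pow_lt; lra).
    apply (Rmult_lt_reg_r (d ^ 3 * m ^ 3)); auto. rewrite Rmult_assoc, Rinv_l by lra.
    assert (Hed : 0 < e * d ^ 3) by nra. assert (HZ : e * d ^ 3 * m > 2) by nra.
    set (Z := e * d ^ 3 * m) in *.
    replace (e * (d ^ 3 * m ^ 3)) with (Z * (m * m)) by (unfold Z; ring).
    assert (Z * m <= Z * (m * m)) by (apply Rmult_le_compat_l; nra). nra. }
  unfold R_dist. rewrite Rabs_left1 by lra. lra.
Qed.

Lemma cheeger_ge n H (c : R) : (2 <= n)%nat ->
  (forall U, In U (sublists (seq 0 n)) -> (0 < length U)%nat -> (2 * length U <= n)%nat ->
     c <= INR (boundary n H U) / INR (length U)) ->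
  cheeger n H >= c.
Proof.
  intros Hn Hall. unfold cheeger.
  set (L := filter (fun U => (0 <? length U)%nat && (2 * length U <=? n)%nat) (sublists (seq 0 n))).
  assert (HL : forall U, In U L -> c <= INR (boundary n H U) / INR (length U)).
  { intros U HU. apply filter_In in HU. destruct HU as [HU B].
    apply andb_prop in B. destruct B as [B1 B2]. apply Nat.ltb_lt in B1. apply Nat.leb_le in B2. auto. }
  (* the singleton {0} is a candidate, so the list of ratios is nonempty *)
  assert (Hin : In [0%nat] L).
  { apply filter_In. split.
    - replace [0%nat] with (filter (Nat.eqb 0) (seq 0 n)); [apply filter_in_sublists|].
      destruct n as [|n']; [lia|]. simpl. f_equal.
      rewrite (filter_ext_in _ (fun _ => false)); [induction (seq 1 n'); auto|].
      intros a Ha. apply in_seq in Ha. destruct a; [lia|reflexivity].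
    - apply andb_true_intro. split; [reflexivity|]. apply Nat.leb_le. simpl length. lia. }
  destruct L as [|U0 L'] eqn:EL; [destruct Hin|]. simpl. apply Rle_ge.
  assert (Hrest : forall r, In r (map (fun U => INR (boundary n H U) / INR (length U)) L') -> c <= r).
  { intros r Hr. apply in_map_iff in Hr. destruct Hr as [U [<- HU]]. apply HL. right; auto. }
  assert (H0 : c <= INR (boundary n H U0) / INR (length U0)) by (apply HL; left; auto).
  clear EL HL Hin. induction L' as [|r rs IH]; simpl; auto.
  apply Rmin_glb; [apply Hrest; left; auto | apply IH; intros; apply Hrest; right; auto].
Qed.

(* For b >= 1/2, the expansion event implies the Cheeger bound, since
   ln(e n/|U|) <= ln(e n) for every nonempty U. *)
Lemma cheeger_from_expansion n G (b d : R) Rg : (2 <= n)%nat -> 1/2 <= b -> 0 < d ->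
  expansion_event n G b d Rg -> cheeger n (graph_union G Rg) >= d / ln (exp 1 * INR n).
Proof.
  intros Hn Hb Hd HE. apply cheeger_ge; auto. intros U HU H1 H2.
  set (N := INR n) in *. set (k := INR (length U)).
  assert (HN : 2 <= N) by (apply (le_INR 2); auto).
  assert (Hk1 : 1 <= k) by (apply (le_INR 1); lia).
  assert (Hk2 : 2 * k <= N) by (unfold k, N; rewrite <- (mult_INR 2); apply le_INR; auto).
  specialize (HE U HU H1 ltac:(fold k N; nra)). unfold threshold in HE. fold k N in HE.
  set (l1 := ln (exp 1 * N / k)) in *. set (l2 := ln (exp 1 * N)).
  assert (He1 := exp1_ge2).
  assert (Hl1 : 1 <= l1) by (apply ln_ratio_ge1; lra).
  assert (Hl12 : l1 <= l2).
  { apply ln_le_mono; [apply Rdiv_lt_0_compat; nra|].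
    unfold Rdiv. rewrite <- (Rmult_1_r (exp 1 * N)) at 2. apply Rmult_le_compat_l; [nra|].
    rewrite <- Rinv_1. apply Rinv_le_contravar; lra. }
  apply Rle_trans with (d / l1).
  - unfold Rdiv. apply Rmult_le_compat_l; [lra|]. apply Rinv_le_contravar; lra.
  - apply (Rmult_le_reg_r k); [lra|]. unfold Rdiv at 2. rewrite Rmult_assoc, Rinv_l by lra. lra.
Qed.

(* Choice of the constants: b = max(alpha, 1/2), c0 = eps (1-b)/2, th = c0/(4+c0)
   and d = c0 / (4 (3 + 2 ln(1/th))). *)
Lemma constants_exist (eps alpha : R) : 0 < eps -> alpha < 1 ->
  exists b th d, alpha <= b /\ 1/2 <= b /\ b < 1 /\ 0 < th <= 1 /\ th <= eps * (1 - b) / 2 / 4 /\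
                 0 < d /\ d * (3 + 2 * ln (/ th)) <= eps * (1 - b) / 2 / 4.
Proof.
  intros Heps Ha.
  set (b := Rmax alpha (1/2)).
  assert (Hb1 : b < 1) by (unfold b; apply Rmax_lub_lt; lra).
  set (c0 := eps * (1 - b) / 2).
  assert (Hc0 : 0 < c0) by (unfold c0; nra).
  set (th := c0 / (4 + c0)).
  assert (Hth : 0 < th <= 1).
  { unfold th. split; [apply Rdiv_lt_0_compat; lra|]. apply (Rmult_le_reg_r (4 + c0)); [lra|].
    unfold Rdiv; rewrite Rmult_assoc, Rinv_l by lra. lra. }
  assert (HLam : 0 <= ln (/ th)) by (apply ln_nonneg; rewrite <- Rinv_1; apply Rinv_le_contravar; lra).
  exists b, th, (c0 / (4 * (3 + 2 * ln (/ th)))). fold c0. repeat split; try lra.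
  - apply Rmax_l.
  - apply Rmax_r.
  - unfold th, Rdiv. apply Rmult_le_compat_l; [lra|]. apply Rinv_le_contravar; lra.
  - apply Rdiv_lt_0_compat; lra.
  - right; field; lra.
Qed.

Theorem theorem2 :
  forall (eps alpha : R), 0 < eps -> alpha < 1 ->
  exists delta : R, 0 < delta /\
  forall Gs : nat -> nat -> nat -> bool,
    (forall n, simple_graph (Gs n) /\ connected n (Gs n)) ->
    Un_cv (fun n => prob_Gnp n (eps / INR n) (fun Rg =>
       forall S : list nat, In S (sublists (seq 0 n)) ->
         (0 < length S)%nat -> INR (length S) <= alpha * INR n ->
         INR (boundary n (graph_union (Gs n) Rg) S)
           >= delta / ln (exp 1 * INR n / INR (length S)) * INR (length S))) 1
    /\
    Un_cv (fun n => prob_Gnp n (eps / INR n) (fun Rg =>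
       cheeger n (graph_union (Gs n) Rg) >= delta / ln (exp 1 * INR n))) 1.
Proof.
  intros eps alpha Heps Ha.
  destruct (constants_exist eps alpha Heps Ha) as [b [th [d [Hab [Hb2 [Hb1 [Hth [Htc [Hd Hdc]]]]]]]]].
  exists d. split; auto. intros Gs HGs.
  destruct (INR_archimed 1 eps) as [m Hm]; [lra|].
  assert (Hbig : forall n, (Nat.max m 2 <= n)%nat ->
            0 <= eps / INR n <= 1 /\ 1 - INR (n + 1) * / (d ^ 3 * INR n ^ 3)
                                     <= prob_Gnp n (eps / INR n) (expansion_event n (Gs n) b d)).
  { intros n Hn. assert (HmN : INR m <= INR n) by (apply le_INR; lia).
    assert (2 <= INR n) by (apply (le_INR 2); lia).
    destruct (HGs n) as [HG HC]. split.
    - split; [left; apply Rdiv_lt_0_compat; lra|]. apply (Rmult_le_reg_r (INR n)); [lra|].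
      unfold Rdiv; rewrite Rmult_assoc, Rinv_l by lra. lra.
    - apply (expansion_prob_bound eps b (eps * (1 - b) / 2) th d); auto; lia || lra. }
  split; apply (Un_cv_one_squeeze _ d (Nat.max m 2) Hd); intros n Hn;
    destruct (Hbig n Hn) as [Hp Hprob]; (split; [|apply prob_le1; auto]);
    (eapply Rle_trans; [exact Hprob|]); apply prob_mono; auto.
  - intros Rg _ HE S HS H0 HSa. apply HE; auto.
    apply Rle_trans with (alpha * INR n); auto. apply Rmult_le_compat_r; auto. apply pos_INR.
  - intros Rg _ HE. apply (cheeger_from_expansion n (Gs n) b d Rg); auto. lia.
Qed.
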